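(* Let $X,Y$ be compact topological spaces, $\mu\in\mathcal{P}(X)$, $\nu\in\mathcal{P}(Y)$, $c\in C(X\times Y)$. For every $u_0\in C(X)$, the sequence $u_m:=S^m(u_0)$ converges uniformly on $X$ to a fixed point $u_\infty$ of $S$.
   Context: For $u\in C(X)$ set $v[u](y)=\log\int_Xe^{-c(x,y)-u(x)}d\mu(x)$, and for $v\in C(Y)$ set $u[v](x)=\log\int_Ye^{-c(x,y)-v(y)}d\nu(y)$. $S:C(X)\to C(X)$ is $S(u)=u[v[u]]$ (an infinite-dimensional form of the Sinkhorn / iterative proportional fitting iteration). *)

From HB Require Import structures.
From mathcomp Require Import all_boot all_order all_algebra.
From mathcomp Require Import all_classical all_reals all_analysis.
Import numFieldNormedType.Exports.
Set Implicit Arguments. Unset Strict Implicit. Unset Printing Implicit Defensive.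
Import Order.TTheory GRing.Theory Num.Theory.
Local Open Scope classical_set_scope.
Local Open Scope ring_scope.

Definition borel (X : ptopologicalType) := g_sigma_algebraType (@open X).

Definition vfun (R : realType) (X Y : ptopologicalType)
  (mu : probability (borel X) R) (c : X * Y -> R) (u : X -> R) : Y -> R :=
  fun y => ln (Rintegral mu setT (fun x : borel X => expR (- c (x, y) - u x))).

Definition ufun (R : realType) (X Y : ptopologicalType)
  (nu : probability (borel Y) R) (c : X * Y -> R) (v : Y -> R) : X -> R :=
  fun x => ln (Rintegral nu setT (fun y : borel Y => expR (- c (x, y) - v y))).

Definition Sink (R : realType) (X Y : ptopologicalType)
  (mu : probability (borel X) R) (nu : probability (borel Y) R)
  (c : X * Y -> R) (u : X -> R) : X -> R :=
  ufun nu c (vfun mu c u).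

(* The soft c-transform f |-> log \int exp (- c - f) contracts oscillations:
   the kernels exp (- c (t, _)) are pairwise comparable up to the factor
   rho = exp (- 2 sup |c|), so if a <= f1 - f2 <= b then the difference of the
   transforms takes values in some [a', b'] inside [- b, - a] with
   exp (b' - a') - 1 <= (1 - rho ^ 2) (exp (b - a) - 1).  Hence the increments
   u_(m+1) - u_m of the Sinkhorn iterates have geometrically decaying
   oscillation.  By Fubini, \int exp (S u - u) dmu = 1, so every increment
   changes sign and its sup norm is bounded by its oscillation: the iterates
   converge uniformly, the limit is continuous, and it is a fixed point because
   S is 1-Lipschitz for the sup norm. *)

From HB Require Import structures.
From mathcomp Require Import all_boot all_order all_algebra.
From mathcomp Require Import all_classical all_reals all_analysis.
From mathcomp Require Import ring lra.
Import numFieldNormedType.Exports.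
Import Order.TTheory GRing.Theory Num.Theory.
Local Open Scope classical_set_scope.
Local Open Scope ring_scope.

Set Implicit Arguments.
Unset Strict Implicit.
Unset Printing Implicit Defensive.

Section ContinuousFunctions.
Context {R : realType}.

Section RealFunctions.
Context {T : topologicalType}.
Implicit Types f g : T -> R.

Lemma continuousD_fun f g :
  continuous f -> continuous g -> continuous (fun x => f x + g x).
Proof. by move=> cf cg x; exact: (continuousD (cf x) (cg x)). Qed.

Lemma continuousN_fun f : continuous f -> continuous (fun x => - f x).
Proof. by move=> cf x; exact: (continuousN (cf x)). Qed.

Lemma continuousM_fun f g :
  continuous f -> continuous g -> continuous (fun x => f x * g x).
Proof. by move=> cf cg x; exact: (continuousM (cf x) (cg x)). Qed.

Lemma continuous_expR_comp f : continuous f -> continuous (fun x => expR (f x)).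
Proof.
by move=> cf x; apply: continuous_comp; [exact: cf | exact: continuous_expR].
Qed.

Lemma continuous_norm_comp f : continuous f -> continuous (fun x => `|f x|).
Proof.
by move=> cf x; apply: continuous_comp; [exact: cf | exact: norm_continuous].
Qed.

Lemma continuous_bounded f : compact [set: T] -> continuous f ->
  exists M, forall x, `|f x| <= M.
Proof.
move=> cptT cf.
have /compact_bounded[M [_ fM]] : compact (f @` [set: T]).
  by apply: continuous_compact => //; exact: continuous_subspaceT.
exists (`|M| + 1) => x; apply: fM; last by exists x.
by rewrite (le_lt_trans (ler_norm M)) // ltrDl.
Qed.

End RealFunctions.

Section Product.
Context {A B : topologicalType}.

Lemma continuous_comp_fst (f : A -> R) :
  continuous f -> continuous (fun p : A * B => f p.1).
Proof. by move=> cf p; apply: continuous_comp; [exact: cvg_fst | exact: cf]. Qed.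

Lemma continuous_comp_snd (f : B -> R) :
  continuous f -> continuous (fun p : A * B => f p.2).
Proof. by move=> cf p; apply: continuous_comp; [exact: cvg_snd | exact: cf]. Qed.

Lemma continuous_comp_swap (F : A * B -> R) :
  continuous F -> continuous (fun p : B * A => F (p.2, p.1)).
Proof.
move=> cF p; apply: (@continuous_comp _ _ _ (fun p : B * A => (p.2, p.1)) F).
  by apply: cvg_pair; [exact: cvg_snd | exact: cvg_fst].
exact: cF.
Qed.

Lemma continuous_sectionr (F : A * B -> R) a :
  continuous F -> continuous (fun b => F (a, b)).
Proof.
move=> cF b; apply: (@continuous_comp _ _ _ (pair a) F); last exact: cF.
by apply: cvg_pair; [exact: cvg_cst | exact: cvg_id].
Qed.

Lemma continuous_sectionl (F : A * B -> R) b :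
  continuous F -> continuous (fun a => F (a, b)).
Proof.
move=> cF a; apply: (@continuous_comp _ _ _ (pair^~ b) F); last exact: cF.
by apply: cvg_pair; [exact: cvg_id | exact: cvg_cst].
Qed.

End Product.

Lemma continuous_measurable (T : ptopologicalType) (f : T -> R) :
  continuous f -> measurable_fun [set: borel T] (f : borel T -> R).
Proof.
move=> /continuousP cf.
apply: (measurability _ (measurable_realfun.RGenOpens.measurableE R)).
move=> _ [_ [a [b ->] <-]]; rewrite setTI; apply: sub_sigma_algebra.
exact/cf/interval_open.
Qed.

End ContinuousFunctions.

Ltac continuity := solve [repeat lazymatch goal with
  | |- continuous (fun x => @?f x + @?g x) => apply: continuousD_fun
  | |- continuous (fun x => - @?f x) => apply: continuousN_fun
  | |- continuous (fun x => @?f x * @?g x) => apply: continuousM_fun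
  | |- continuous (fun x => expR (@?f x)) => apply: continuous_expR_comp
  | |- continuous (fun x => `|@?f x|) => apply: continuous_norm_comp
  | |- continuous (fun x => ?F (?a, x)) => apply: continuous_sectionr
  | |- continuous (fun x => ?F (x, ?b)) => apply: continuous_sectionl
  | |- continuous (fun p => ?F (p.2, p.1)) => apply: continuous_comp_swap
  | |- continuous (fun _ => _) => first
      [ assumption | apply: cst_continuous
      | apply: continuous_comp_fst | apply: continuous_comp_snd ]
  | |- continuous _ => assumption
  end].
Lemma continuous_integrable (R : realType) (T : ptopologicalType)
    (P : probability (borel T) R) (D : set (borel T)) (f : T -> R) :
  compact [set: T] -> measurable D -> continuous f -> P.-integrable D (EFin \o f).
Proof.
move=> cptT mD cf; apply: measurable_bounded_integrable => //.
- by rewrite (le_lt_trans (probability_le1 P mD)) // ltry.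
- exact: measurable_funS (continuous_measurable cf).
- have [M fM] := continuous_bounded cptT cf.
  exists M; split; first exact: num_real.
  by move=> N MN x _ /=; rewrite (le_trans (fM x)) // ltW.
Qed.

Ltac integrable := apply: continuous_integrable => //; continuity.

Section ContinuousIntegral.
Context {R : realType} {T : ptopologicalType}.
Hypothesis cptT : compact [set: T].
Variable P : probability (borel T) R.
Implicit Types (f g h : T -> R) (D : set (borel T)).
Local Notation I := (Rintegral P setT).

Lemma Rintegral_dist_le D f g r : measurable D -> continuous f -> continuous g ->
  (forall x, D x -> `|f x - g x| <= r) ->
  `|Rintegral P D f - Rintegral P D g| <= r * fine (P D).
Proof.
move=> mD cf cg fg; rewrite -RintegralB -?Rintegral_cst //; try integrable.
rewrite (le_trans (le_normr_Rintegral _ _)) //; first integrable.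
by apply: le_Rintegral => //; try integrable; exact: fg.
Qed.

Lemma Rintegral_cstT (r : R) : I (fun=> r) = r.
Proof.
(* [change] retypes [setT] so that [probability_setT] matches it. *)
rewrite Rintegral_cst //; change (r * fine (P setT) = r).
by rewrite probability_setT mulr1.
Qed.

Lemma Rintegral_expR_gt0 f : continuous f -> 0 < I (fun x => expR (f x)).
Proof.
move=> cf; have [M fM] := continuous_bounded cptT cf.
apply: (lt_le_trans (expR_gt0 (- M))); rewrite -[leLHS]Rintegral_cstT.
apply: le_Rintegral => //; try integrable.
by move=> x _; rewrite ler_expR lerNl; have /ler_normlP[] := fM x.
Qed.

Lemma Rintegral_mul_bounds h g al be : continuous h -> continuous g ->
  (forall x, 0 <= h x) -> (forall x, al <= g x <= be) ->
  al * I h <= I (fun x => h x * g x) <= be * I h.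
Proof.
move=> ch cg h0 gb; rewrite -!RintegralZl //; try integrable.
apply/andP; split; apply: le_Rintegral => //; try integrable; move=> x _.
- by rewrite mulrC ler_wpM2l //; have /andP[] := gb x.
- by rewrite mulrC ler_wpM2r //; have /andP[] := gb x.
Qed.

Lemma Rintegral_ratio_contraction h h' g rho be :
  continuous h -> continuous h' -> continuous g -> 0 <= rho ->
  (forall x, 0 <= h' x) -> (forall x, rho * h' x <= h x) ->
  (forall x, rho * h x <= h' x) -> (forall x, 0 <= g x <= be) ->
  0 < I h -> 0 < I h' ->
  I (fun x => h x * g x) / I h <=
    (1 - rho ^+ 2) * be + rho ^+ 2 * (I (fun x => h' x * g x) / I h').
Proof.
move=> ch ch' cg rho0 h'0 hh' h'h gb Ih0 Ih'0.
set E' := _ / I h'.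
have /andP[_ N'_le] := Rintegral_mul_bounds ch' cg h'0 gb.
have N'E' : I (fun x => h' x * g x) = E' * I h' by rewrite divfK ?gt_eqF.
have D'_ge : rho * I h <= I h'.
  by rewrite -RintegralZl //; [apply: le_Rintegral => //; integrable | integrable].
have N_le : I (fun x => h x * g x) <=
    I (fun x => be * (h x - rho * h' x) + rho * (h' x * g x)).
  apply: le_Rintegral => //; try integrable; move=> x _.
  have := hh' x; have /andP[g0 gbe] := gb x; nra.
rewrite RintegralD ?RintegralZl ?RintegralB ?RintegralZl // in N_le; try integrable.
rewrite N'E' in N_le N'_le; rewrite ler_pM2r // in N'_le.
have key : 0 <= rho * (be - E') * (I h' - rho * I h).
  by rewrite !mulr_ge0 // subr_ge0.
rewrite ler_pdivrMr //; nra.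
Qed.

End ContinuousIntegral.

Section ParametricIntegral.
Context {R : realType} {A B : ptopologicalType}.
Hypothesis cptB : compact [set: B].
Variable F : A * B -> R.
Hypothesis cF : continuous F.

Lemma near_section_dist_lt a0 (e : R) : 0 < e ->
  \forall a \near a0, forall b, `|F (a, b) - F (a0, b)| < e.
Proof.
move=> e0; have e2 : 0 < e / 2 by rewrite divr_gt0.
suff : \forall a \near a0, [set: B] `<=` (fun b => `|F (a, b) - F (a0, b)| < e).
  by apply: filterS => a ae b; exact: ae.
apply: (proj1 (compact_near_coveringP _) cptB) => b _.
have /cvgrPdist_lt/(_ _ e2) := @cF (a0, b).
case=> -[Ua Ub] /= [Ua0 Ubb] close; exists (Ub, Ua) => // -[b' a] [/= Ubb' Uaa].
have h1 := close (a, b') (conj Uaa Ubb').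
have h2 := close (a0, b') (conj (nbhs_singleton Ua0) Ubb').
rewrite /= in h1 h2.
rewrite (le_lt_trans (ler_distD (F (a0, b)) _ _)) //.
by rewrite (splitr e) ltrD // distrC.
Qed.

Lemma continuous_parametric_Rintegral (P : probability (borel B) R)
    (D : set (borel B)) :
  measurable D -> continuous (fun a => Rintegral P D (fun b => F (a, b))).
Proof.
move=> mD a0; apply/cvgrPdist_lt => e e0; have e2 : 0 < e / 2 by rewrite divr_gt0.
have PD0 : 0 <= fine (P D) by rewrite fine_ge0.
have PD1 : fine (P D) <= 1.
  by rewrite -lee_fin fineK ?fin_num_measure ?probability_le1.
apply: filterS (near_section_dist_lt a0 e2) => a close /=.
rewrite (le_lt_trans (Rintegral_dist_le cptB P mD _ _ (r := e / 2) _)) //;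
  try continuity; last by nra.
by move=> b _; rewrite distrC; exact/ltW/close.
Qed.

End ParametricIntegral.

(* Borel sets of X * Y need not be product-measurable, so the library's Fubini
   theorem does not apply; instead X is cut into finitely many Borel pieces on
   each of which F (x, _) stays uniformly close to some F (p, _). *)
Section FubiniContinuous.
Context {R : realType} {X Y : ptopologicalType}.
Hypotheses (cptX : compact [set: X]) (cptY : compact [set: Y]).
Variables (mu : probability (borel X) R) (nu : probability (borel Y) R).
Variable F : X * Y -> R.
Hypothesis cF : continuous F.

Let integral_y x := Rintegral nu setT (fun y => F (x, y)).
Let integral_x (D : set X) y := Rintegral mu D (fun x => F (x, y)).
Let defect (D : set X) :=
  Rintegral mu D integral_y - Rintegral nu setT (integral_x D).

Let integral_y_continuous : continuous integral_y.
Proof. exact: continuous_parametric_Rintegral. Qed.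

Let integral_x_continuous (D : set (borel X)) : measurable D ->
  continuous (integral_x D).
Proof.
move=> mD; apply: (continuous_parametric_Rintegral (F := fun p : Y * X => F (p.2, p.1))
  cptX _ mD); continuity.
Qed.

Let defectU (D1 D2 : set (borel X)) : measurable D1 -> measurable D2 ->
  [disjoint D1 & D2] -> defect (D1 `|` D2) = defect D1 + defect D2.
Proof.
move=> mD1 mD2 D12; have mD : measurable (D1 `|` D2) by exact: measurableU.
rewrite /defect.
have -> : integral_x (D1 `|` D2) = fun y => integral_x D1 y + integral_x D2 y.
  by apply/funext => y; apply: Rintegral_setU => //; integrable.
rewrite RintegralD; last 3 first.
- exact: measurableT.
- by apply: continuous_integrable => //; exact: integral_x_continuous.
- by apply: continuous_integrable => //; exact: integral_x_continuous.
rewrite Rintegral_setU //; first by rewrite opprD addrACA.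
exact: continuous_integrable.
Qed.

Let defect_local p e (D : set (borel X)) : measurable D ->
  (forall x, D x -> forall y, `|F (x, y) - F (p, y)| <= e) ->
  `|defect D| <= (e + e) * fine (mu D).
Proof.
move=> mD close.
have inner_y : `|Rintegral mu D integral_y - integral_y p * fine (mu D)| <=
    e * fine (mu D).
  rewrite -Rintegral_cst //.
  apply: Rintegral_dist_le => //; first exact: cst_continuous.
  move=> x Dx.
  have := Rintegral_dist_le cptY nu measurableT _ _ (fun y _ => close x Dx y).
  by rewrite probability_setT mulr1; apply; continuity.
have inner_x : `|Rintegral nu setT (integral_x D) - integral_y p * fine (mu D)| <=
    e * fine (mu D).
  rewrite -RintegralZr //; last by integrable.
  have := Rintegral_dist_le cptY nu measurableT _ _ (r := e * fine (mu D)) _.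
  rewrite probability_setT mulr1; apply; try continuity.
  - exact: integral_x_continuous.
  - move=> y _; rewrite -Rintegral_cst //.
    by apply: Rintegral_dist_le => //; try continuity; move=> x Dx; exact: close.
have := ler_distD (integral_y p * fine (mu D)) (Rintegral mu D integral_y)
  (Rintegral nu setT (integral_x D)).
rewrite [X in _ <= _ + X]distrC /defect; lra.
Qed.

Let defect_cover e (U : X -> set (borel X)) (s : seq X) (D : set (borel X)) :
  (forall p, measurable (U p)) ->
  (forall p x, U p x -> forall y, `|F (x, y) - F (p, y)| <= e) ->
  measurable D -> D `<=` \bigcup_(p in [set` s]) U p ->
  `|defect D| <= (e + e) * fine (mu D).
Proof.
move=> mU close; elim: s D => [|p s IH] D mD Ds.
  have -> : D = set0 by apply/seteqP; split => // x /Ds [].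
  rewrite /defect; have -> : integral_x set0 = fun=> 0.
    by apply/funext => y; exact: Rintegral_set0.
  by rewrite Rintegral_set0 Rintegral_cst // mul0r subrr normr0 measure0 mulr0.
have mDU : measurable (D `&` U p) by exact: measurableI.
have mDUc : measurable (D `&` ~` U p) by apply: measurableI => //; exact: measurableC.
have DE : D = (D `&` U p) `|` (D `&` ~` U p) by rewrite -setIUr setUCr setIT.
have DUUc : [disjoint D `&` U p & D `&` ~` U p].
  by apply/disj_setPS => x [[_ ?] [_ ?]].
have muE : fine (mu D) = fine (mu (D `&` U p)) + fine (mu (D `&` ~` U p)).
  rewrite -[LHS]mul1r -[X in X + _]mul1r -[X in _ + X]mul1r -!Rintegral_cst // {1}DE.
  by apply: Rintegral_setU => //; rewrite -DE; integrable.
rewrite muE {1}DE defectU // mulrDr (le_trans (ler_normD _ _)) // lerD //.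
  by apply: (defect_local (p := p)) => // x [_]; exact: close.
apply: IH => // x [Dx Ucx]; have [q] := Ds x Dx.
by rewrite /= in_cons => /predU1P[-> //|sq Uqx]; exists q.
Qed.

Lemma fubini_continuous :
  Rintegral mu setT (fun x => Rintegral nu setT (fun y => F (x, y))) =
  Rintegral nu setT (fun y => Rintegral mu setT (fun x => F (x, y))).
Proof.
apply/eqP; rewrite -subr_eq0 -normr_le0; apply/ler_addgt0Pr => e e0.
have e2 : 0 < e / 2 by rewrite divr_gt0.
pose U p := interior [set x | forall y, `|F (x, y) - F (p, y)| < e / 2].
have [s _ cover] : finite_subset_cover [set: X] U [set: X].
  move: cptX; rewrite compact_cover; apply => [p _ | x _]; first exact: open_interior.
  by exists x => //; exact: near_section_dist_lt.
have := @defect_cover (e / 2) U (finmap.enum_fset s) setT _ _ measurableT cover.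
rewrite probability_setT mulr1 add0r -splitr; apply.
- by move=> p; apply: sub_sigma_algebra; exact: open_interior.
- by move=> p x /interior_subset /= close y; exact/ltW/close.
Qed.

End FubiniContinuous.

Lemma ratio_range_contraction {R : realType} (T : pointedType) (E : T -> R)
    (al be th : R) :
  0 < al -> 0 < th <= 1 -> (forall t, al <= E t <= be) ->
  (forall t t', E t <= (1 - th) * be + th * E t') ->
  exists lo hi, [/\ al <= lo, hi <= be, (forall t, lo <= E t <= hi) &
    hi / lo - 1 <= (1 - th) * (be / al - 1)].
Proof.
move=> al0 /andP[th0 th1] Eb Ec.
have al_E t : al <= E t by case/andP: (Eb t).
have E_be t : E t <= be by case/andP: (Eb t).
have rangeE0 : range E !=set0 by exists (E point), point.
pose lo := inf (range E).
have lo_E t : lo <= E t.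
  by apply: ge_inf; [exists al => _ [s _ <-] | exists t].
have al_lo : al <= lo by apply: lb_le_inf => // _ [t _ <-].
have E_hi t : E t <= (1 - th) * be + th * lo.
  suff : (E t - (1 - th) * be) / th <= lo by rewrite ler_pdivrMr //; lra.
  apply: lb_le_inf => // _ [t' _ <-].
  by rewrite ler_pdivrMr //; have := Ec t t'; lra.
have lo0 : 0 < lo by exact: lt_le_trans al_lo.
have lo_be : lo <= be by exact: le_trans (lo_E point) (E_be point).
exists lo, ((1 - th) * be + th * lo); split => //; first nra.
  by move=> t; rewrite lo_E E_hi.
have -> : ((1 - th) * be + th * lo) / lo - 1 = (1 - th) * (be / lo - 1).
  by field; rewrite gt_eqF.
rewrite ler_wpM2l ?subr_ge0 // lerD2r ler_wpM2l ?lef_pV2 ?posrE //.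
exact: le_trans (ltW al0) (le_trans al_lo lo_be).
Qed.

Lemma kernel_ratio_bounds (R : realType) (C : R) :
  0 <= C -> 0 < expR (- (C + C)) ^+ 2 <= 1.
Proof.
move=> C0; rewrite exprn_gt0 ?expR_gt0 //= expr_le1 ?expR_ge0 //.
by rewrite -expR0 ler_expR; lra.
Qed.

Section SoftTransform.
Context {R : realType} {A B : ptopologicalType}.
Hypothesis cptB : compact [set: B].
Variables (P : probability (borel B) R) (G : A * B -> R).
Hypothesis cG : continuous G.

Definition soft_transform (f : B -> R) (t : A) : R :=
  ln (Rintegral P setT (fun s => expR (- G (t, s) - f s))).

Lemma soft_transform_continuous (f : B -> R) :
  continuous f -> continuous (soft_transform f).
Proof.
move=> cf t.
have cI := continuous_parametric_Rintegral cptB (F := fun p => expR (- G p - f p.2))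
  (P := P) ltac:(continuity) measurableT.
apply: (continuous_comp (cI t)); apply: continuous_ln.
by apply: Rintegral_expR_gt0 => //; continuity.
Qed.

Let soft_transform_sub (f1 f2 : B -> R) t : continuous f1 -> continuous f2 ->
  soft_transform f1 t - soft_transform f2 t =
  ln (Rintegral P setT (fun s => expR (- G (t, s) - f2 s) * expR (f2 s - f1 s)) /
      Rintegral P setT (fun s => expR (- G (t, s) - f2 s))).
Proof.
move=> cf1 cf2.
have I_gt0 f : continuous f -> 0 < Rintegral P setT (fun s => expR (- G (t, s) - f s)).
  by move=> cf; apply: Rintegral_expR_gt0 => //; continuity.
have -> : Rintegral P setT (fun s => expR (- G (t, s) - f2 s) * expR (f2 s - f1 s)) =
    Rintegral P setT (fun s => expR (- G (t, s) - f1 s)).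
  by apply: eq_Rintegral => s _; rewrite -expRD; congr expR; ring.
by rewrite lnM ?lnV ?posrE ?invr_gt0 ?I_gt0.
Qed.

Let kernel_comparable (C : R) (f : B -> R) t t' s : (forall p, `|G p| <= C) ->
  expR (- (C + C)) * expR (- G (t', s) - f s) <= expR (- G (t, s) - f s).
Proof.
move=> GC; rewrite -expRD ler_expR.
by have := GC (t, s); have := GC (t', s); rewrite !ler_norml; lra.
Qed.

Lemma soft_transform_contraction (C : R) (f1 f2 : B -> R) (a b : R) :
  (forall p, `|G p| <= C) -> continuous f1 -> continuous f2 ->
  (forall s, a <= f1 s - f2 s <= b) ->
  exists a' b', [/\ - b <= a', b' <= - a,
    (forall t, a' <= soft_transform f1 t - soft_transform f2 t <= b') &
    expR (b' - a') - 1 <= (1 - expR (- (C + C)) ^+ 2) * (expR (b - a) - 1)].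
Proof.
move=> GC cf1 cf2 f12.
pose h t s := expR (- G (t, s) - f2 s).
pose g s := expR (f2 s - f1 s).
pose I := Rintegral P setT.
pose E t := I (fun s => h t s * g s) / I (h t).
have ch t : continuous (h t) by rewrite /h; continuity.
have cg : continuous g by rewrite /g; continuity.
have Ih0 t : 0 < I (h t) by apply: Rintegral_expR_gt0 => //; continuity.
have g_bounds s : expR (- b) <= g s <= expR (- a).
  by rewrite !ler_expR; have := f12 s; lra.
have E_bounds t : expR (- b) <= E t <= expR (- a).
  have h0 s : 0 <= h t s by exact/ltW/expR_gt0.
  have /andP[lo hi] := Rintegral_mul_bounds cptB P (ch t) cg h0 g_bounds.
  by rewrite ler_pdivlMr // ler_pdivrMr // lo hi.
have E_comp t t' : E t <= (1 - expR (- (C + C)) ^+ 2) * expR (- a) +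
    expR (- (C + C)) ^+ 2 * E t'.
  have g_nonneg s : 0 <= g s <= expR (- a).
    by rewrite (ltW (expR_gt0 _)); case/andP: (g_bounds s).
  apply: Rintegral_ratio_contraction => //; try exact: Ih0.
  - by move=> s; exact/ltW/expR_gt0.
  - by move=> s; exact: kernel_comparable.
  - by move=> s; exact: kernel_comparable.
have [lo [hi [al_lo hi_be E_lohi osc]]] := ratio_range_contraction (expR_gt0 (- b))
  (kernel_ratio_bounds (le_trans (normr_ge0 _) (GC point))) E_bounds E_comp.
have lo0 : 0 < lo by exact: lt_le_trans (expR_gt0 _) al_lo.
have hi0 : 0 < hi.
  by case/andP: (E_lohi point) => /(lt_le_trans lo0); exact: lt_le_trans.
exists (ln lo), (ln hi); split.
- by rewrite -[- b]expRK ler_ln ?posrE ?expR_gt0.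
- by rewrite -[- a]expRK ler_ln ?posrE ?expR_gt0.
- move=> t; rewrite soft_transform_sub // -/(h t) -/g -/I -/(E t).
  by case/andP: (E_lohi t) => loE Ehi; rewrite !ler_ln ?posrE // (lt_le_trans lo0).
- by rewrite (_ : b - a = - a - - b); [rewrite !expRB !lnK ?posrE | ring].
Qed.

End SoftTransform.

Section GeometricLimits.
Context {R : realType}.

Lemma geometric_uniform_limit (T : Type) (u : nat -> T -> R) (W q : R) :
  0 <= q < 1 -> (forall m x, `|u m.+1 x - u m x| <= geometric W q m) ->
  exists uinf, forall m x, `|u m x - uinf x| <= geometric (W / (1 - q)) q m.
Proof.
move=> /andP[q0 q1] du; rewrite /geometric /= in du *.
set K := W / (1 - q).
have KW m : K * q ^+ m - K * q ^+ m.+1 = W * q ^+ m.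
  by rewrite exprS /K; field; rewrite subr_eq0 gt_eqF.
pose hi m x := u m x + K * q ^+ m.
pose lo m x := u m x - K * q ^+ m.
have hi_dec x : nonincreasing_seq (hi ^~ x).
  apply/nonincreasing_seqP => m; rewrite /hi.
  by have := du m x; rewrite ler_norml -KW => /andP[_]; lra.
have lo_inc x : nondecreasing_seq (lo ^~ x).
  apply/nondecreasing_seqP => m; rewrite /lo.
  by have := du m x; rewrite ler_norml -KW => /andP[]; lra.
have lo_hi m n x : lo m x <= hi n x.
  have W0 : 0 <= W by have := du 0%N x; rewrite expr0 mulr1; exact: le_trans.
  have Kq0 k : 0 <= K * q ^+ k.
    by rewrite mulr_ge0 ?exprn_ge0 // divr_ge0 // subr_ge0 ltW.
  apply: le_trans (lo_inc x _ _ (leq_maxl m n)) _.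
  apply: le_trans (hi_dec x _ _ (leq_maxr m n)).
  by rewrite /lo /hi lerD2l; have := Kq0 (maxn m n); lra.
exists (fun x => inf (range (hi ^~ x))) => m x.
have hi_ne : range (hi ^~ x) !=set0 by exists (hi 0%N x), 0%N.
have lo_le : lo m x <= inf (range (hi ^~ x)) by apply: lb_le_inf => // _ [n _ <-].
have le_hi : inf (range (hi ^~ x)) <= hi m x.
  by apply: ge_inf; [exists (lo 0%N x) => _ [n _ <-] | exists m].
by rewrite ler_norml; rewrite /lo /hi in lo_le le_hi; lra.
Qed.

Lemma dist_limit_continuous (T : topologicalType) (u : nat -> T -> R)
    (uinf : T -> R) (d : nat -> R) :
  d @ \oo --> 0 -> (forall m, continuous (u m)) ->
  (forall m x, `|u m x - uinf x| <= d m) -> continuous uinf.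
Proof.
move=> d0 cu ud x; apply/cvgrPdist_lt => e e0.
have e3 : 0 < e / 3 by rewrite divr_gt0.
have [N _ dN] := cvgr_lt 0 d0 _ e3; have dNe := dN N (leqnn N).
have /cvgrPdist_lt/(_ _ e3) := cu N x; apply: filterS => y uNxy.
have uNx : `|uinf x - u N x| <= d N by rewrite distrC.
have uNy := ud N y.
have := ler_distD (u N x) (uinf x) (uinf y).
have := ler_distD (u N y) (u N x) (uinf y).
lra.
Qed.

End GeometricLimits.

Section Sinkhorn.
Context {R : realType} {X Y : ptopologicalType}.
Hypotheses (cptX : compact [set: X]) (cptY : compact [set: Y]).
Variables (mu : probability (borel X) R) (nu : probability (borel Y) R).
Variables (c : X * Y -> R) (C : R).
Hypotheses (cc : continuous c) (cC : forall p, `|c p| <= C).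

Local Notation S := (Sink mu nu c).

Let c_swap (p : Y * X) := c (p.2, p.1).
Let c_swap_continuous : continuous c_swap. Proof. exact: continuous_comp_swap. Qed.
Let SinkE u : S u = soft_transform nu c (soft_transform mu c_swap u).
Proof. by []. Qed.

Let rate := (1 - expR (- (C + C)) ^+ 2) ^+ 2.

Let factor_bounds : 0 <= 1 - expR (- (C + C)) ^+ 2 < 1.
Proof.
have /andP[t0 t1] := kernel_ratio_bounds (le_trans (normr_ge0 _) (cC point)).
by apply/andP; split; lra.
Qed.

Lemma Sink_continuous u : continuous u -> continuous (S u).
Proof.
by move=> cu; rewrite SinkE; do 2 apply: soft_transform_continuous => //.
Qed.

Lemma iter_Sink_continuous u0 m : continuous u0 -> continuous (iter m S u0).
Proof. by move=> cu0; elim: m => // m IH; exact: Sink_continuous. Qed.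

Lemma Sink_contraction (u1 u2 : X -> R) (a b : R) :
  continuous u1 -> continuous u2 -> (forall x, a <= u1 x - u2 x <= b) ->
  exists a' b', [/\ a <= a', b' <= b,
    (forall x, a' <= S u1 x - S u2 x <= b') &
    expR (b' - a') - 1 <= rate * (expR (b - a) - 1)].
Proof.
move=> cu1 cu2 u12.
have [a1 [b1 [ha1 hb1 v12 osc1]]] :=
  soft_transform_contraction cptX mu c_swap_continuous (fun p => cC (p.2, p.1))
    cu1 cu2 u12.
have [a2 [b2 [ha2 hb2 w12 osc2]]] := soft_transform_contraction cptY nu cc cC
  (soft_transform_continuous cptX c_swap_continuous cu1)
  (soft_transform_continuous cptX c_swap_continuous cu2) v12.
exists a2, b2; split => //; [lra | lra |].
have /andP[k0 _] := factor_bounds.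
by rewrite /rate expr2 -mulrA; exact: le_trans osc2 (ler_wpM2l k0 osc1).
Qed.

Lemma Sink_dist_le (u1 u2 : X -> R) (d : R) :
  continuous u1 -> continuous u2 -> (forall x, `|u1 x - u2 x| <= d) ->
  forall x, `|S u1 x - S u2 x| <= d.
Proof.
move=> cu1 cu2 u12.
have u12' x : - d <= u1 x - u2 x <= d by rewrite -ler_norml.
have [a' [b' [ha' hb' Su12 _]]] := Sink_contraction cu1 cu2 u12'.
move=> x; have /andP[lo hi] := Su12 x.
by rewrite ler_norml (le_trans ha' lo) (le_trans hi hb').
Qed.

Lemma Sink_mass u : continuous u ->
  Rintegral mu setT (fun x => expR (S u x - u x)) = 1.
Proof.
move=> cu; pose v := vfun mu c u.
have cv : continuous v by exact: (soft_transform_continuous cptX c_swap_continuous cu).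
pose F p := expR (- c p - u p.1 - v p.2).
have cF : continuous F by rewrite /F; continuity.
have x_marginal x : expR (S u x - u x) = Rintegral nu setT (fun y => F (x, y)).
  rewrite /Sink /ufun -/v expRD lnK ?posrE; last first.
    by apply: Rintegral_expR_gt0 => //; continuity.
  rewrite -RintegralZr //; last by integrable.
  by apply: eq_Rintegral => y _; rewrite /F -expRD; congr expR; ring.
have y_marginal y : Rintegral mu setT (fun x => F (x, y)) = 1.
  rewrite -(expR0 R) -(subrr (v y)) expRD {1}/v /vfun lnK ?posrE; last first.
    by apply: Rintegral_expR_gt0 => //; continuity.
  rewrite -RintegralZr //; last by integrable.
  by apply: eq_Rintegral => x _; rewrite /F -expRD; congr expR; ring.
under eq_Rintegral do rewrite x_marginal.
rewrite (fubini_continuous cptX cptY mu nu cF).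
under eq_Rintegral do rewrite y_marginal.
exact: Rintegral_cstT.
Qed.

Lemma Sink_drift_sign u (a b : R) : continuous u ->
  (forall x, a <= S u x - u x <= b) -> a <= 0 <= b.
Proof.
move=> cu ab; have cSu := Sink_continuous cu.
suff : expR a <= 1 <= expR b by rewrite -expR0 !ler_expR.
rewrite -(Sink_mass cu) -{1}[expR a](Rintegral_cstT mu) -[expR b](Rintegral_cstT mu).
by apply/andP; split; apply: le_Rintegral => //; try integrable;
  move=> x _; rewrite ler_expR; case/andP: (ab x).
Qed.

Lemma Sink_iter_geometric u0 : continuous u0 ->
  exists q W, 0 <= q < 1 /\
    forall m x, `|iter m.+1 S u0 x - iter m S u0 x| <= geometric W q m.
Proof.
move=> cu0; pose u m := iter m S u0.
have cu m : continuous (u m) by exact: iter_Sink_continuous.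
have [M uM] : exists M, forall x, `|u 1%N x - u 0%N x| <= M.
  by have cu1 := cu 1%N; apply: continuous_bounded => //; continuity.
have /andP[k0 k1] := factor_bounds.
exists rate, (expR (M + M) - 1); split.
  by rewrite /rate exprn_ge0 //= expr_lt1.
move=> m x; rewrite /geometric /= mulrC.
change (`|u m.+1 x - u m x| <= rate ^+ m * (expR (M + M) - 1)).
have [a [b [ab osc]]] : exists a b, (forall x, a <= u m.+1 x - u m x <= b) /\
    expR (b - a) - 1 <= rate ^+ m * (expR (M + M) - 1).
  elim: m => [|m [a [b [ab osc]]]].
    by exists (- M), M; split => [y|]; rewrite ?expr0 ?mul1r ?opprK // -ler_norml.
  have [a' [b' [_ _ ab' osc']]] := Sink_contraction (cu m.+1) (cu m) ab.
  exists a', b'; split => //; rewrite exprS -mulrA.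
  by apply: le_trans osc' (ler_wpM2l _ osc); rewrite exprn_ge0.
have /andP[a0 b0] := Sink_drift_sign (cu m) ab.
apply: le_trans osc; have /andP[lo hi] := ab x; have := expR_ge1Dx (b - a).
by rewrite ler_norml; lra.
Qed.

Lemma Sink_limit_fixed u0 uinf (d : nat -> R) :
  continuous u0 -> continuous uinf -> d @ \oo --> 0 ->
  (forall m x, `|iter m S u0 x - uinf x| <= d m) -> S uinf = uinf.
Proof.
move=> cu0 cuinf d0 ud; apply/funext => x.
apply/eqP; rewrite -subr_eq0 -normr_le0; apply/ler_addgt0Pr => e e0.
have e2 : 0 < e / 2 by rewrite divr_gt0.
have [N _ dN] := cvgr_lt 0 d0 _ e2.
have uinf_uN y : `|uinf y - iter N S u0 y| <= d N by rewrite distrC.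
have SuN := Sink_dist_le cuinf (iter_Sink_continuous (m := N) cu0) uinf_uN x.
have tri := ler_distD (iter N.+1 S u0 x) (S uinf x) (uinf x).
rewrite add0r; apply: le_trans tri (le_trans (lerD SuN (ud N.+1 x)) _).
by have := dN N (leqnn N); have := dN N.+1 (leqnSn N); lra.
Qed.

End Sinkhorn.

Theorem theorem2p8 (R : realType) (X Y : ptopologicalType)
  (hX : compact [set: X]) (hY : compact [set: Y])
  (mu : probability (borel X) R) (nu : probability (borel Y) R)
  (c : X * Y -> R) (hc : continuous c)
  (u0 : X -> R) (hu0 : continuous u0) :
  exists uinf : X -> R,
    continuous uinf /\ Sink mu nu c uinf = uinf /\
    (forall e : R, 0 < e -> exists N : nat, forall m : nat, (N <= m)%N ->
       forall x : X, `| iter m (Sink mu nu c) u0 x - uinf x | < e).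
Proof.
have [C cC] : exists C, forall p, `|c p| <= C.
  by apply: continuous_bounded => //; rewrite -setXTT; exact: compact_setX.
have [q [W [q01 du]]] := Sink_iter_geometric hX hY mu nu hc cC hu0.
have [uinf ud] := geometric_uniform_limit q01 du.
have d0 : geometric (W / (1 - q)) q @ \oo --> 0.
  by apply: cvg_geometric; case/andP: q01 => q0 q1; rewrite ger0_norm.
have cu m : continuous (iter m (Sink mu nu c) u0) by exact: iter_Sink_continuous.
have cuinf := dist_limit_continuous d0 cu ud.
exists uinf; split=> //; split.
  by apply: (Sink_limit_fixed hX hY hc cC hu0 cuinf d0).
move=> e e0; have [N _ dN] := cvgr_lt 0 d0 _ e0.
by exists N => m Nm x; exact: le_lt_trans (ud m x) (dN m Nm).
Qed.
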